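(* Let $N\ge 1$, $d\ge 1$, $T>0$, $M>0$, and let $\alpha=(\alpha_1,\dots,\alpha_N)\in\mathcal U_M$. Let $(x_i,v_i)_{i=1}^N$, with $x_i(t),v_i(t)\in\mathbb R^d$, solve on $[0,T]$ $$\dot x_i=v_i,\qquad \dot v_i=-\alpha_i v_i+(1-\alpha_i)\frac1N\sum_{j=1}^N (v_j-v_i),\qquad i=1,\dots,N,$$ and let $\bar v=\frac1N\sum_i v_i$. Assume $\bar v(0)\neq 0$, put $e=\bar v(0)/\|\bar v(0)\|$, $\xi_i=\langle v_i,e\rangle$, $\bar\xi=\frac1N\sum_i\xi_i$, and assume $\xi_1(0)\ge\xi_2(0)\ge\dots\ge\xi_N(0)$. Then $\bar v(t)\neq 0$ and $\bar\xi(t)>0$ for all $t\in[0,T]$. Moreover, for every $\tau\in[0,T]$ and every $i$: if $\xi_i(\tau)\ge 0$ then $\xi_i(t)\ge 0$ for all $t\in[\tau,T]$, and if $\xi_i(\tau)>0$ then $\xi_i(t)>0$ for all $t\in[\tau,T]$.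
   Context: $\mathcal U_M$ denotes the set of measurable maps $\alpha:[0,T]\to[0,1]^N$ such that $\sum_{i=1}^N\alpha_i(t)\le M$ for all $t\in[0,T]$. (This is a collective migration model with target velocity $0$, in which $\alpha_i$ balances attraction to the target velocity against alignment with the group.) *)

From HB Require Import structures.
From mathcomp Require Import all_boot all_order all_algebra.
From mathcomp Require Import all_classical all_reals all_analysis.
Set Implicit Arguments. Unset Strict Implicit. Unset Printing Implicit Defensive.
Import Order.TTheory GRing.Theory Num.Theory.
Local Open Scope ring_scope.

Section Defs.
Variable R : realType.

Definition dotv (d : nat) (a b : 'rV[R]_d) : R := \sum_(k < d) a 0 k * b 0 k.
Definition normv (d : nat) (a : 'rV[R]_d) : R := Num.sqrt (dotv a a).

Definition meanv (N d : nat) (w : 'I_N -> 'rV[R]_d) : 'rV[R]_d :=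
  N%:R^-1 *: \sum_(j < N) w j.

Definition in_UM (N : nat) (T M : R) (alpha : R -> 'I_N -> R) : Prop :=
  (forall i, measurable_fun `[0, T]%classic (fun t => alpha t i)) /\
  (forall t, 0 <= t <= T -> forall i, 0 <= alpha t i <= 1) /\
  (forall t, 0 <= t <= T -> \sum_(i < N) alpha t i <= M).

Definition vrhs (N d : nat) (alpha : R -> 'I_N -> R) (v : 'I_N -> R -> 'rV[R]_d)
  (i : 'I_N) (t : R) : 'rV[R]_d :=
  - (alpha t i *: v i t)
  + (1 - alpha t i) *: (N%:R^-1 *: \sum_(j < N) (v j t - v i t)).

(* (x,v) is a (Caratheodory / absolutely continuous) solution on [0,T]:
   the right-hand sides are Lebesgue integrable on [0,T] and the integral
   form of the ODE holds componentwise. *)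
Definition is_solution (N d : nat) (T : R) (alpha : R -> 'I_N -> R)
  (x v : 'I_N -> R -> 'rV[R]_d) : Prop :=
  forall i (k : 'I_d),
    (lebesgue_measure).-integrable `[0, T]%classic
        (fun s => (v i s 0 k)%:E) /\
    (lebesgue_measure).-integrable `[0, T]%classic
        (fun s => (vrhs alpha v i s 0 k)%:E) /\
    (forall t, 0 <= t <= T ->
       (x i t 0 k)%:E = (x i 0 0 k)%:E
          + (\int[lebesgue_measure]_(s in `[0%R, t]%classic) (v i s 0 k)%:E)%E) /\
    (forall t, 0 <= t <= T ->
       (v i t 0 k)%:E = (v i 0 0 k)%:E
          + (\int[lebesgue_measure]_(s in `[0%R, t]%classic)
                (vrhs alpha v i s 0 k)%:E)%E).

End Defs.

From HB Require Import structures.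
From mathcomp Require Import all_boot all_order all_algebra.
From mathcomp Require Import all_classical all_reals all_analysis.
From mathcomp Require Import measurable_realfun ring lra.
Import Order.TTheory GRing.Theory Num.Theory numFieldNormedType.Exports.
Local Open Scope classical_set_scope.
Local Open Scope ring_scope.

(* Projecting the velocity equation on e gives, with B = (1/N) sum_i (1 - alpha_i) in [0, 1],
     xibar' = - (1 - B) xibar   and   xi_i' = - xi_i + (1 - alpha_i) xibar,
   so xibar, and each xi_i once xibar > 0 is known, satisfies y' >= - max(y, 0) in integral
   form. For such a y, comparison with the line y(s) (1 - (t - s)) gives y(t) >= y(s) / 2
   whenever y(s) >= 0 and 0 <= t - s <= 1/2; iterating, y(t) >= 2^-n y(tau), so nonnegativity
   and positivity propagate forward in time. Since xibar(0) = |vbar(0)| > 0, this applies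
   first to xibar and then to every xi_i. *)

Section integral_representation.
Context {R : realType}.
Notation mu := (@lebesgue_measure R).
Implicit Types (T t r s c : R) (w g : R -> R).

Definition integral_repr T w g :=
  mu.-integrable `[0, T] (EFin \o g) /\
  forall t, 0 <= t <= T -> w t = w 0 + \int[mu]_(s in `[0, t]) g s.

Lemma integrable_subitv {T t g} : t <= T ->
  mu.-integrable `[0, T] (EFin \o g) -> mu.-integrable `[0, t] (EFin \o g).
Proof. by move=> tT; apply: integrableS => //; apply: subset_itvl; rewrite bnd_simp. Qed.

Lemma integral_repr_EFin {T w g} :
  mu.-integrable `[0, T] (EFin \o g) ->
  (forall t, 0 <= t <= T ->
     (w t)%:E = (w 0)%:E + (\int[mu]_(s in `[0%R, t]) (g s)%:E)%E) ->
  integral_repr T w g.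
Proof.
move=> ig wE; split => // t /andP[t0 tT].
have /integrable_fin_num ig_fin := integrable_subitv tT ig.
apply: EFin_inj; rewrite EFinD fineK ?ig_fin //.
by apply: wE; rewrite t0.
Qed.

Lemma integral_repr_add {T w1 g1 w2 g2} :
  integral_repr T w1 g1 -> integral_repr T w2 g2 ->
  integral_repr T (fun t => w1 t + w2 t) (fun t => g1 t + g2 t).
Proof.
move=> [ig1 w1E] [ig2 w2E]; split; first exact: (integrableD _ ig1 ig2).
move=> t /andP[t0 tT].
rewrite RintegralD ?(integrable_subitv tT) // [w1 t]w1E ?t0 // [w2 t]w2E ?t0 //; lra.
Qed.

Lemma integral_repr_scale {T} c {w g} : integral_repr T w g ->
  integral_repr T (fun t => c * w t) (fun t => c * g t).
Proof.
move=> [ig wE]; split; first exact: (integrableZl _ _ ig).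
move=> t /andP[t0 tT].
by rewrite RintegralZl ?(integrable_subitv tT) // [w t]wE ?t0 // mulrDr.
Qed.

Lemma integral_repr_sum {T} {I : Type} (s : seq I) {w g : I -> R -> R} :
  (forall i, integral_repr T (w i) (g i)) ->
  integral_repr T (fun t => \sum_(i <- s) w i t) (fun t => \sum_(i <- s) g i t).
Proof.
move=> wg; elim: s => [|i s IHs].
  under eq_fun do rewrite big_nil; under [X in _ _ _ X]eq_fun do rewrite big_nil.
  split; first exact: integrable0.
  by move=> t _; rewrite Rintegral_cst // mul0r addr0.
under eq_fun do rewrite big_cons; under [X in _ _ _ X]eq_fun do rewrite big_cons.
exact: integral_repr_add.
Qed.

Lemma integral_repr_continuous {T w g} : 0 <= T -> integral_repr T w g ->
  {within `[0, T], continuous w}.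
Proof.
move=> T0 [ig wE].
apply: (@subspace_eq_continuous _ _ _ (fun t => w 0 + parameterized_integral mu 0 t g)).
  by move=> t /set_mem; rewrite /= in_itv /= => t0T; rewrite -wE.
apply: (within_continuousD (f := cst (w 0))).
  exact: continuous_subspaceT (fun _ => cvg_cst _).
exact: parameterized_integral_continuous.
Qed.

Lemma integral_repr_increment_ge {T w g r s c} : integral_repr T w g ->
  0 <= r -> r <= s -> s <= T -> (forall q, r < q <= s -> - c <= g q) ->
  - c * (s - r) <= w s - w r.
Proof.
move=> [ig wE] r0 rs sT gc.
have s0 := le_trans r0 rs.
have igs := integrable_subitv sT ig.
have -> : w s - w r = \int[mu]_(q in `]r, s]) g q.
  rewrite [w s]wE ?s0 ?sT // [w r]wE ?r0 ?(le_trans rs sT) //.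
  by rewrite opprD addrACA subrr add0r (Rintegral_itvB igs) // bnd_simp.
have -> : - c * (s - r) = \int[mu]_(q in `]r, s]) (- c).
  rewrite Rintegral_cst //; congr (_ * _).
  have := lebesgue_measure_itv `]r, s]; rewrite /= lte_fin => ->.
  by case: ltgtP rs => // -> _; rewrite subrr.
apply: le_Rintegral => //.
- apply/integrableP; split; first exact/measurable_EFinP/measurable_cst.
  rewrite integral_cst //= lebesgue_measure_itv /= lte_fin.
  by case: ifP => _; rewrite ?mule0 // -EFinD -EFinM ltry.
- by apply: integrableS igs => //; apply: subset_itvr; rewrite bnd_simp.
Qed.

End integral_representation.

Section comparison.
Context {R : realType}.
Implicit Types (a b r s t q e dl : R) (u : R -> R).

Lemma within_itv_continuous_dist {a b u} : {within `[a, b], continuous u} ->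
  forall r, a <= r <= b -> forall e, 0 < e -> exists2 dl : R, 0 < dl &
    forall q, a <= q <= b -> `|q - r| < dl -> `|u q - u r| < e.
Proof.
move=> /subspace_continuousP cu r rab e e0.
have /(cvgrPdist_lt _ _).1 /(_ e e0) := cu r (ltac:(by rewrite /= in_itv)).
move=> /(nbhs_ballP _ _).1 [dl /= dl0 near_r].
exists dl => // q qab qr; rewrite distrC; apply: near_r; last by rewrite /= in_itv.
by rewrite /ball /= distrC.
Qed.

Lemma continuous_barrier {a b u} : {within `[a, b], continuous u} -> 0 <= u a ->
  (forall r s, a <= r -> r <= s -> s <= b ->
     (forall q, r < q <= s -> u q <= 0) -> u r <= u s) ->
  forall t, a <= t <= b -> 0 <= u t.
Proof.
move=> cu ua u_mono t /andP[a_t tb]; rewrite leNgt; apply/negP => ut.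
pose Z := [set s | a <= s <= t /\ 0 <= u s].
have Za : Z a by rewrite /Z /= lexx a_t.
have ubZ : ubound Z t by move=> s [/andP[_ ->]].
have supZ : has_sup Z by split; [exists a | exists t].
(* r is the last time before t at which u is nonnegative. *)
set r := sup Z.
have ar : a <= r := sup_upper_bound supZ Za.
have rt : r <= t := ge_sup (ex_intro _ a Za) ubZ.
have rab : a <= r <= b by rewrite ar (le_trans rt tb).
have ur : 0 <= u r.
  rewrite leNgt; apply/negP => ur; have nur : 0 < - u r by rewrite oppr_gt0.
  have [dl dl0 near_r] := within_itv_continuous_dist cu r rab _ nur.
  have [z [/andP[az zt] uz] rz] := sup_adherent dl0 supZ.
  have zr : z <= r by apply: sup_upper_bound => //; rewrite /Z /= az zt.
  have rz' : r - z < dl by move: rz; rewrite -/r; lra.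
  have := near_r z (ltac:(by rewrite az (le_trans zt tb))).
  rewrite ler0_norm ?subr_le0 // opprB => /(_ rz').
  have := ler_norm (u z - u r); lra.
suff : u r <= u t by lra.
apply: u_mono => // q /andP[rq qt]; rewrite leNgt; apply/negP => uq.
have : q <= r by apply: sup_upper_bound => //; rewrite /Z /= qt (le_trans ar (ltW rq)) ltW.
by rewrite leNgt rq.
Qed.

End comparison.

Section decay_lower_bound.
Context {R : realType} {T : R} {y g : R -> R}.
Implicit Types (q s t tau : R).
Hypotheses (T_ge0 : 0 <= T) (y_repr : integral_repr T y g)
  (g_ge : forall q, 0 <= q <= T -> - Num.max (y q) 0 <= g q).

Lemma linear_lower_bound {s t} : 0 <= s -> s <= t -> t <= T -> 0 <= y s ->
  y s * (1 - (t - s)) <= y t.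
Proof.
move=> s0 st tT ys.
pose u q := y q - y s * (1 - (q - s)).
have cu : {within `[s, t], continuous u}.
  apply: (within_continuousB (f := y)).
    apply: (continuous_subspaceW _ (integral_repr_continuous T_ge0 y_repr)).
    by apply: subset_itv; rewrite bnd_simp.
  apply: continuous_subspaceT => q; apply: cvgM; first exact: cvg_cst.
  by apply: cvgB; [exact: cvg_cst | apply: cvgB; [exact: cvg_id | exact: cvg_cst]].
suff : 0 <= u t by rewrite /u subr_ge0.
have us : 0 <= u s by rewrite /u subrr subr0 mulr1 subrr.
apply: (continuous_barrier cu us _ t); last by rewrite st lexx.
move=> r r' sr rr' r't u_le0.
suff g_ge_ys : forall q, r < q <= r' -> - y s <= g q.
  have := integral_repr_increment_ge y_repr (le_trans s0 sr) rr' (le_trans r't tT) g_ge_ys.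
  rewrite /u; lra.
move=> q /andP[rq qr'].
have qT : 0 <= q <= T.
  by rewrite (le_trans s0 (le_trans sr (ltW rq))) (le_trans qr' (le_trans r't tT)).
apply: le_trans (g_ge q qT); rewrite lerN2 ge_max ys andbT.
have := u_le0 q; rewrite rq qr' => /(_ isT); rewrite /u.
have : 0 <= y s * (q - s) by rewrite mulr_ge0 // subr_ge0 (le_trans sr (ltW rq)).
lra.
Qed.

Lemma geometric_lower_bound {tau n t} : 0 <= tau -> 0 <= y tau ->
  tau <= t <= T -> t <= tau + n%:R / 2 -> y tau / 2 ^+ n <= y t.
Proof.
move=> tau0 ytau; elim: n t => [|n IHn] t /andP[taut tT] tn.
  have -> : t = tau by apply/le_anti; rewrite taut andbT; move: tn; rewrite mul0r addr0.
  by rewrite expr0 divr1.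
rewrite exprSr invfM mulrA.
have a_ge0 : 0 <= y tau / 2 ^+ n by rewrite divr_ge0 // exprn_ge0.
set s := tau + n%:R / 2.
have taus : tau <= s by rewrite lerDl divr_ge0.
case: (leP t s) => [ts|st].
  have := IHn t (ltac:(by rewrite taut tT)) ts; lra.
have sT : s <= T := le_trans (ltW st) tT.
have ys := IHn s (ltac:(by rewrite taus sT)) (lexx _).
have := linear_lower_bound (le_trans tau0 taus) (ltW st) tT (le_trans a_ge0 ys).
have : t - s <= 2^-1 by move: tn; rewrite /s -natr1 mulrDl mul1r; lra.
nra.
Qed.

Lemma sign_persists {tau t} : 0 <= tau -> tau <= t <= T ->
  (0 <= y tau -> 0 <= y t) /\ (0 < y tau -> 0 < y t).
Proof.
move=> tau0 /andP[taut tT].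
pose n := Num.bound (2 * (t - tau)).
have tn : t <= tau + n%:R / 2.
  have := archi_boundP (ltac:(by rewrite mulr_ge0 // subr_ge0) : 0 <= 2 * (t - tau)).
  rewrite -/n; lra.
have k_gt0 : 0 < (2 ^+ n)^-1 :> R by rewrite invr_gt0 exprn_gt0.
have bound : 0 <= y tau -> y tau / 2 ^+ n <= y t.
  by move=> ytau; apply: geometric_lower_bound; rewrite ?taut.
split => ytau; have := bound (ltac:(lra)); rewrite mulrC.
- by have := mulr_ge0 (ltW k_gt0) ytau; lra.
- by have := mulr_gt0 k_gt0 ytau; lra.
Qed.

End decay_lower_bound.

Section inner_product.
Context {R : realType} {d : nat}.
Implicit Types (a b c : 'rV[R]_d) (k : R).

Lemma dotvDl a b c : dotv (a + b) c = dotv a c + dotv b c.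
Proof. by rewrite /dotv -big_split; apply: eq_bigr => j _; rewrite mxE mulrDl. Qed.

Lemma dotvNl a c : dotv (- a) c = - dotv a c.
Proof. by rewrite /dotv -sumrN; apply: eq_bigr => j _; rewrite mxE mulNr. Qed.

Lemma dotvZl k a c : dotv (k *: a) c = k * dotv a c.
Proof. by rewrite /dotv mulr_sumr; apply: eq_bigr => j _; rewrite mxE mulrA. Qed.

Lemma dotvZr k a c : dotv a (k *: c) = k * dotv a c.
Proof. by rewrite /dotv mulr_sumr; apply: eq_bigr => j _; rewrite mxE mulrCA. Qed.

Lemma dotv0l c : dotv 0 c = 0.
Proof. by rewrite -(scale0r 0) dotvZl mul0r. Qed.

Lemma dotv_suml n (f : 'I_n -> 'rV[R]_d) c :
  dotv (\sum_(j < n) f j) c = \sum_(j < n) dotv (f j) c.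
Proof. by rewrite /dotv exchange_big; apply: eq_bigr => j _; rewrite summxE mulr_suml. Qed.

Lemma dotv_meanv n (f : 'I_n -> 'rV[R]_d) c :
  dotv (meanv f) c = n%:R^-1 * \sum_(j < n) dotv (f j) c.
Proof. by rewrite dotvZl dotv_suml. Qed.

Lemma dotvv_gt0 a : a != 0 -> 0 < dotv a a.
Proof.
move=> a0; rewrite lt_def sumr_ge0 ?andbT; last by move=> j _; rewrite -expr2 sqr_ge0.
apply: contra a0 => /eqP /psumr_eq0P a2_eq0; apply/eqP/rowP => j.
have /eqP := a2_eq0 (fun j _ => ltac:(by rewrite -expr2 sqr_ge0)) j isT.
by rewrite mxE mulf_eq0 orbb => /eqP.
Qed.

End inner_product.

Lemma avg_ge0_le1 {R : realType} {n} {c : 'I_n -> R} : (0 < n)%N ->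
  (forall i, 0 <= c i <= 1) -> 0 <= n%:R^-1 * \sum_(i < n) c i <= 1.
Proof.
move=> n_gt0 c01; have n_pos : 0 < n%:R :> R by rewrite ltr0n.
have sum_le : \sum_(i < n) c i <= n%:R.
  by rewrite -[n in n%:R]card_ord -sumr_const; apply: ler_sum => i _; case/andP: (c01 i).
have sum_ge0 : 0 <= \sum_(i < n) c i by apply: sumr_ge0 => i _; case/andP: (c01 i).
by rewrite mulr_ge0 ?invr_ge0 ?(ltW n_pos) //= mulrC ler_pdivrMr // mul1r.
Qed.

Section alignment_model.
Context {R : realType} {N d : nat}.
Context {alpha : R -> 'I_N -> R} {v : 'I_N -> R -> 'rV[R]_d}.
Hypothesis N_gt0 : (0 < N)%N.

Lemma vrhsE i s :
  vrhs alpha v i s = - v i s + (1 - alpha s i) *: meanv (fun j => v j s).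
Proof.
have N_neq0 : N%:R != 0 :> R by rewrite pnatr_eq0 -lt0n.
apply/rowP => k; rewrite /vrhs /meanv !mxE !summxE.
under eq_bigr do rewrite !mxE.
rewrite sumrB sumr_const card_ord -mulr_natr.
by field.
Qed.

Lemma dotv_vrhs e i s : dotv (vrhs alpha v i s) e =
  - dotv (v i s) e + (1 - alpha s i) * dotv (meanv (fun j => v j s)) e.
Proof. by rewrite vrhsE dotvDl dotvNl dotvZl. Qed.

Lemma dotv_meanv_vrhs e s : dotv (meanv (fun j => vrhs alpha v j s)) e =
  (N%:R^-1 * \sum_(j < N) (1 - alpha s j) - 1) * dotv (meanv (fun j => v j s)) e.
Proof.
have N_neq0 : N%:R != 0 :> R by rewrite pnatr_eq0 -lt0n.
rewrite dotv_meanv; under eq_bigr do rewrite dotv_vrhs.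
rewrite big_split /= sumrN -mulr_suml dotv_meanv.
by field.
Qed.

Context {T : R}.
Hypothesis alpha01 : forall q, 0 <= q <= T -> forall i, 0 <= alpha q i <= 1.

Lemma dotv_meanv_vrhs_ge e q : 0 <= q <= T ->
  - Num.max (dotv (meanv (fun j => v j q)) e) 0 <=
  dotv (meanv (fun j => vrhs alpha v j q)) e.
Proof.
move=> qT; rewrite dotv_meanv_vrhs lerNl le_max.
have /andP[B0 B1] : 0 <= N%:R^-1 * \sum_(j < N) (1 - alpha q j) <= 1.
  apply: avg_ge0_le1 N_gt0 _ => i.
  by have /andP[? ?] := alpha01 q qT i; apply/andP; split; lra.
by case: (leP 0 (dotv (meanv (fun j => v j q)) e)) => ?; apply/orP; [left | right]; nra.
Qed.

Lemma dotv_vrhs_ge e i q : 0 <= q <= T -> 0 <= dotv (meanv (fun j => v j q)) e ->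
  - Num.max (dotv (v i q) e) 0 <= dotv (vrhs alpha v i q) e.
Proof.
move=> qT mean_ge0; rewrite dotv_vrhs lerNl le_max; apply/orP; left.
by have /andP[? ?] := alpha01 q qT i; nra.
Qed.

Context {x : 'I_N -> R -> 'rV[R]_d}.
Hypothesis sol : is_solution T alpha x v.

Lemma solution_dotv_repr e i :
  integral_repr T (fun t => dotv (v i t) e) (fun t => dotv (vrhs alpha v i t) e).
Proof.
have coord_repr k : integral_repr T
    (fun t => e 0 k * v i t 0 k) (fun t => e 0 k * vrhs alpha v i t 0 k).
  have [_ [ig [_ vE]]] := sol i k.
  exact: integral_repr_scale (integral_repr_EFin ig vE).
have := integral_repr_sum (index_enum 'I_d) coord_repr.
by congr integral_repr; apply/funext => t; apply: eq_bigr => k _; rewrite mulrC.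
Qed.

Lemma solution_meanv_repr e :
  integral_repr T (fun t => dotv (meanv (fun j => v j t)) e)
    (fun t => dotv (meanv (fun j => vrhs alpha v j t)) e).
Proof.
have := integral_repr_scale N%:R^-1
  (integral_repr_sum (index_enum 'I_N) (solution_dotv_repr e)).
by congr integral_repr; apply/funext => t; rewrite dotv_meanv.
Qed.

End alignment_model.

Theorem proposition1 (R : realType) (N d : nat) (T M : R)
  (alpha : R -> 'I_N -> R) (x v : 'I_N -> R -> 'rV[R]_d) :
  (0 < N)%N -> (0 < d)%N -> 0 < T -> 0 < M ->
  in_UM T M alpha ->
  is_solution T alpha x v ->
  meanv (fun j => v j 0) != 0 ->
  let e := (normv (meanv (fun j => v j 0)))^-1 *: meanv (fun j => v j 0) in
  let xi := fun (i : 'I_N) (t : R) => dotv (v i t) e in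
  let xibar := fun t : R => N%:R^-1 * \sum_(i < N) xi i t in
  (forall i j : 'I_N, (i <= j)%N -> xi j 0 <= xi i 0) ->
  (forall t, 0 <= t <= T -> meanv (fun j => v j t) != 0 /\ 0 < xibar t) /\
  (forall (tau : R) (i : 'I_N), 0 <= tau <= T ->
     (0 <= xi i tau -> forall t, tau <= t <= T -> 0 <= xi i t) /\
     (0 < xi i tau -> forall t, tau <= t <= T -> 0 < xi i t)).
Proof.
move=> N_gt0 _ /ltW T_ge0 _ [_ [alpha01 _]] sol mean0_neq0 e xi xibar _.
have xibarE t : xibar t = dotv (meanv (fun j => v j t)) e by rewrite dotv_meanv.
have xibar_repr := solution_meanv_repr sol e; rewrite -(funext xibarE) in xibar_repr.
have xibar_decay q : 0 <= q <= T ->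
    - Num.max (xibar q) 0 <= dotv (meanv (fun j => vrhs alpha v j q)) e.
  by rewrite xibarE; exact: dotv_meanv_vrhs_ge.
have xibar0 : 0 < xibar 0.
  by rewrite xibarE dotvZr mulr_gt0 ?dotvv_gt0 // invr_gt0 sqrtr_gt0 dotvv_gt0.
have xibar_pos t : 0 <= t <= T -> 0 < xibar t.
  by move=> tT; exact: (sign_persists T_ge0 xibar_repr xibar_decay (lexx 0) tT).2 xibar0.
have xi_decay i q : 0 <= q <= T -> - Num.max (xi i q) 0 <= dotv (vrhs alpha v i q) e.
  move=> qT; apply: (dotv_vrhs_ge N_gt0 alpha01) => //.
  by have := xibar_pos q qT; rewrite xibarE => /ltW.
split=> [t tT | tau i /andP[tau0 _]].
  split; last exact: xibar_pos.
  by apply: contraTneq (xibar_pos t tT) => mean_eq0; rewrite xibarE mean_eq0 dotv0l ltxx.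
have persists t := sign_persists T_ge0 (solution_dotv_repr sol e i) (xi_decay i) (t := t) tau0.
by split=> ? t ?; [apply: (persists t _).1 | apply: (persists t _).2].
Qed.
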